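(* With notation as in the context (type $E_6$ over $\mathbb{Z}/3$), the map $f:\Delta\to\Gamma$ is a bijection.
   Context: Let $V=(\mathbb{Z}/3)^5$ with the standard symmetric form $((x_1,\dots,x_5)|(y_1,\dots,y_5))=\sum_i x_iy_i$, and $\Gamma=\{x\in V\setminus\{0\}:(x|x)=2\}$. Let $\Delta$ be the root system of type $E_6$ with simple roots $\alpha_1,\dots,\alpha_6$, where $\langle\alpha_i,\alpha_i\rangle=2$, $\langle\alpha_i,\alpha_j\rangle=-1$ if $\{i,j\}\in\{\{1,3\},\{3,4\},\{4,5\},\{5,6\},\{2,4\}\}$ and $0$ otherwise; $\Lambda=\bigoplus\mathbb{Z}\alpha_i$. Let $f:\Lambda\to V$ be the group homomorphism with $f(\alpha_1)=(1,2,0,0,0)$, $f(\alpha_2)=(0,0,0,1,2)$, $f(\alpha_3)=(0,1,2,0,0)$, $f(\alpha_4)=(0,0,1,2,0)$, $f(\alpha_5)=(0,0,0,1,1)$, $f(\alpha_6)=(1,1,1,1,1)$. *)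

From HB Require Import structures.
From mathcomp Require Import all_boot all_order all_algebra.
Set Implicit Arguments. Unset Strict Implicit. Unset Printing Implicit Defensive.
Import GRing.Theory Num.Theory.
Local Open Scope ring_scope.

Definition V := 'rV['F_3]_5.
Definition formV (x y : V) : 'F_3 := \sum_(i < 5) x 0 i * y 0 i.
Definition Gamma : {set V} := [set x : V | (x != 0) && (formV x x == 2%:R)].

(* Lambda = Z^6 in the basis of simple roots alpha_1..alpha_6;
   index i : 'I_6 corresponds to alpha_(i+1). *)
Definition Lam := 'rV[int]_6.

Definition adjE6 (i j : nat) : bool :=
  (i, j) \in [:: (0, 2); (2, 0); (2, 3); (3, 2); (3, 4); (4, 3);
                 (4, 5); (5, 4); (1, 3); (3, 1)]%N.

Definition cartanE6 (i j : 'I_6) : int :=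
  if i == j then 2 else if adjE6 i j then -1 else 0.

Definition formL (x y : Lam) : int :=
  \sum_(i < 6) \sum_(j < 6) x 0 i * cartanE6 i j * y 0 j.

Definition alpha (i : 'I_6) : Lam := delta_mx 0 i.

Definition srefl (i : 'I_6) (x : Lam) : Lam := x - formL x (alpha i) *: alpha i.

Inductive E6root : Lam -> Prop :=
| E6root_simple i : E6root (alpha i)
| E6root_refl i x : E6root x -> E6root (srefl i x).

Definition fvals : seq (seq nat) :=
  [:: [:: 1; 2; 0; 0; 0]%N; [:: 0; 0; 0; 1; 2]%N; [:: 0; 1; 2; 0; 0]%N;
      [:: 0; 0; 1; 2; 0]%N; [:: 0; 0; 0; 1; 1]%N; [:: 1; 1; 1; 1; 1]%N].

Definition falpha (i : 'I_6) : V := \row_(j < 5) ((nth 0%N (nth [::] fvals i) j)%:R).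

Definition fmap (x : Lam) : V := \sum_(i < 6) falpha i *~ x 0 i.

(* Delta is the orbit of the simple roots under the simple reflections, so it can
   be computed as a finite closure: reflecting the simple roots 11 times yields a
   list of 72 vectors that is closed under every simple reflection, hence is
   exactly Delta. Evaluating f on this list shows that it lands in Gamma and is
   injective, and running through all 3^5 vectors of V shows that every element
   of Gamma is attained. *)

From mathcomp Require Import all_boot all_order all_algebra.
Set Implicit Arguments.
Unset Strict Implicit.
Unset Printing Implicit Defensive.
Import GRing.Theory.
Local Open Scope ring_scope.

Section FiniteClosure.
Variables (T I : eqType) (act : I -> T -> T) (gens : seq I).

Definition closure_step (R : seq T) : seq T :=
  undup (R ++ [seq act i x | i <- gens, x <- R]).

Lemma closure_step_sub R : {subset R <= closure_step R}.
Proof. by move=> x xR; rewrite mem_undup mem_cat xR. Qed.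

Lemma iter_closure_step_sub n (seed : seq T) : {subset seed <= iter n closure_step seed}.
Proof. by elim: n => [|n IHn] x //= /IHn; apply: closure_step_sub. Qed.

Lemma iter_closure_step_ind (P : T -> Prop) (n : nat) (seed : seq T) :
  (forall x, x \in seed -> P x) ->
  (forall i x, i \in gens -> P x -> P (act i x)) ->
  forall x, x \in iter n closure_step seed -> P x.
Proof.
move=> Pseed Pact; elim: n => [|n IHn] x //=; first exact: Pseed.
rewrite mem_undup mem_cat => /orP[/IHn //|/allpairsP[[i y] /= [gi Ry ->]]].
by apply: Pact gi (IHn y Ry).
Qed.

End FiniteClosure.

Definition sum_iota (R : nmodType) (n : nat) (F : nat -> R) : R :=
  foldr (fun k acc => F k + acc) 0 (iota 0 n).

Lemma sum_iotaE (R : nmodType) n (F : nat -> R) : sum_iota n F = \sum_(k < n) F k.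
Proof.
by rewrite /sum_iota -(foldr_map F +%R 0) foldrE big_map -(big_mkord xpredT) /index_iota subn0.
Qed.

Definition coords (R : Type) n (x : 'rV[R]_n) : seq R := [seq x 0 i | i <- enum 'I_n].

Lemma size_coords (R : Type) n (x : 'rV[R]_n) : size (coords x) = n.
Proof. by rewrite size_map size_enum_ord. Qed.

Lemma nth_coords (R : Type) n x0 (x : 'rV[R]_n) (i : 'I_n) : nth x0 (coords x) i = x 0 i.
Proof.
by rewrite (nth_map i) ?size_enum_ord // (_ : nth i _ _ = i) //; apply/val_inj/nth_enum_ord.
Qed.

Lemma coords_inj (R : eqType) n : injective (@coords R n).
Proof.
by move=> x y /eq_in_map exy; apply/rowP => i; apply: exy; rewrite mem_enum.
Qed.

Lemma coords_mkseq (R : Type) n (x : 'rV[R]_n) (f : nat -> R) :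
  (forall i : 'I_n, x 0 i = f i) -> coords x = mkseq f n.
Proof.
move=> xf; apply: (@eq_from_nth _ (f 0%N)); rewrite size_coords ?size_mkseq // => i lt_in.
by rewrite (nth_coords _ _ (Ordinal lt_in)) xf nth_mkseq.
Qed.

Lemma mulmxzE (R : zmodType) m n (A : 'M[R]_(m, n)) (z : int) i j : (A *~ z) i j = A i j *~ z.
Proof. by case: z => k; rewrite ?NegzE ?mulrNz ?mxE mulmxnE. Qed.

Lemma val_Zp_int p (z : int) : (1 < p)%N -> (z%:~R : 'Z_p) = `|(z %% p)%Z|%N :> nat.
Proof.
move=> p_gt1; have p_gt0 : (0 < p)%N := ltnW p_gt1.
rewrite {1}(divz_eq z p) intrD intrM -[(p : int)%:~R]/(p%:R) pchar_Zp // mulr0 add0r.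
have : (0 <= z %% p < p)%Z by rewrite modz_ge0 ?ltz_pmod // -lt0n.
case: (z %% p)%Z => // m /andP[_]; rewrite ltz_nat -pmulrn => m_lt.
by rewrite val_Zp_nat // modn_small.
Qed.

Definition words (m : nat) : nat -> seq (seq nat) :=
  fix words n := if n is n'.+1 then [seq k :: w | k <- iota 0 m, w <- words n'] else [:: [::]].

Lemma mem_words m w : all (fun k => k < m)%N w -> w \in words m (size w).
Proof.
elim: w => [|k w IHw] //= /andP[lt_km /IHw w_in].
by apply/allpairsP; exists (k, w); rewrite mem_iota.
Qed.

Lemma formL_alpha x i : formL x (alpha i) = \sum_(k < 6) x 0 k * cartanE6 k i.
Proof.
apply: eq_bigr => k _; rewrite (bigD1 i) //= big1 => [|j /negbTE ji].
  by rewrite /alpha mxE !eqxx mulr1 addr0.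
by rewrite /alpha mxE ji mulr0.
Qed.

(* Executable counterparts, on coordinate sequences, of [cartanE6], [srefl],
   [alpha] and [fmap]: matrices and big operators are locked, so [vm_compute]
   cannot evaluate the definitions on ['rV_n] directly. *)
Definition cartanS (i j : nat) : int := if i == j then 2 else if adjE6 i j then -1 else 0.

Definition pairingS (s : seq int) (i : nat) : int :=
  sum_iota 6 (fun k => nth 0 s k * cartanS k i).

Definition sreflS (i : nat) (s : seq int) : seq int :=
  mkseq (fun j => nth 0 s j - pairingS s i * (j == i)%:R) 6.

Definition unitS (i : nat) : seq int := mkseq (fun j => (j == i)%:R) 6.

(* The lowest root has height -11 and is 11 simple reflections away from a
   simple root; fewer rounds do not give a reflection-closed list. *)
Definition rootsS : seq (seq int) :=
  iter 11 (closure_step sreflS (iota 0 6)) (map unitS (iota 0 6)).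

Definition fmapS (s : seq int) : seq nat :=
  mkseq (fun j => absz (sum_iota 6 (fun k => (nth 0%N (nth [::] fvals k) j)%:Z * nth 0 s k) %% 3)%Z) 5.

Definition GammaS (w : seq nat) : bool :=
  (w != nseq 5 0%N) && (sumn [seq k * k | k <- w] %% 3 == 2)%N.

Lemma sreflS_rootsS i s : (i < 6)%N -> s \in rootsS -> sreflS i s \in rootsS.
Proof.
have closed : all (fun s => all (fun i => sreflS i s \in rootsS) (iota 0 6)) rootsS.
  by vm_compute.
by move=> lt_i6 /(allP closed)/allP; apply; rewrite mem_iota.
Qed.

Lemma fmapS_Gamma : {in rootsS, forall s, GammaS (fmapS s)}.
Proof. by apply/allP; vm_compute. Qed.

Lemma fmapS_inj : {in rootsS &, injective fmapS}.
Proof.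
have inj : all (fun s => all (fun t => (fmapS s == fmapS t) ==> (s == t)) rootsS) rootsS.
  by vm_compute.
move=> s t s_in t_in /eqP fst; apply/eqP.
exact: implyP (allP (allP inj s s_in) t t_in) fst.
Qed.

Lemma fmapS_onto w : w \in words 3 5 -> GammaS w -> w \in map fmapS rootsS.
Proof.
have onto : all (fun w => GammaS w ==> (w \in map fmapS rootsS)) (words 3 5) by vm_compute.
by move=> /(allP onto)/implyP.
Qed.

Lemma coords_alpha (i : 'I_6) : coords (alpha i) = unitS i.
Proof. by apply: coords_mkseq => j; rewrite mxE. Qed.

Lemma pairingS_coords x (i : 'I_6) : pairingS (coords x) i = formL x (alpha i).
Proof.
rewrite /pairingS sum_iotaE formL_alpha.
by apply: eq_bigr => k _; rewrite nth_coords.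
Qed.

Lemma coords_srefl i x : coords (srefl i x) = sreflS i (coords x).
Proof.
apply: coords_mkseq => j.
by rewrite !mxE nth_coords pairingS_coords.
Qed.

Lemma coords_E6root a : E6root a -> coords a \in rootsS.
Proof.
elim=> [i | i x _ x_in].
  by rewrite coords_alpha; apply/iter_closure_step_sub/map_f; rewrite mem_iota /=.
by rewrite coords_srefl; apply: sreflS_rootsS (ltn_ord i) x_in.
Qed.

Lemma E6root_of_rootsS s : s \in rootsS -> exists2 a, E6root a & coords a = s.
Proof.
move: s; apply: (iter_closure_step_ind (P := fun s => exists2 a, E6root a & coords a = s)).
  move=> s /mapP[i]; rewrite mem_iota => /= lt_i6 ->.
  by exists (alpha (Ordinal lt_i6)); [apply: E6root_simple | rewrite coords_alpha].
move=> i s; rewrite mem_iota => /= lt_i6 [a Ra <-].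
by exists (srefl (Ordinal lt_i6) a); [apply: E6root_refl | rewrite coords_srefl].
Qed.

Definition residues (v : V) : seq nat := map val (coords v).

Lemma residues_inj : injective residues.
Proof. by move=> v w /(inj_map val_inj)/coords_inj. Qed.

Lemma residues_words v : residues v \in words 3 5.
Proof.
have <- : size (residues v) = 5%N by rewrite size_map size_coords.
by apply: mem_words; apply/allP => _ /mapP[x _ ->]; apply: ltn_ord.
Qed.

Lemma residues_fmap a : residues (fmap a) = fmapS (coords a).
Proof.
rewrite /residues (@coords_mkseq _ _ _
  (fun j => (sum_iota 6 (fun k => (nth 0%N (nth [::] fvals k) j)%:Z * nth 0 (coords a) k))%:~R)).
  by rewrite /mkseq -map_comp; apply: eq_map => j; apply: val_Zp_int.
move=> j; rewrite sum_iotaE rmorph_sum summxE.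
by apply: eq_bigr => k _; rewrite mulmxzE nth_coords /= intrM mulrzr mxE.
Qed.

Lemma residues0 : residues 0 = nseq 5 0%N.
Proof. by rewrite /residues (@coords_mkseq _ _ _ (fun=> 0)) // => j; rewrite mxE. Qed.

Lemma formV_residues v : formV v v = (sumn [seq k * k | k <- residues v])%:R.
Proof.
rewrite /formV [index_enum _]unlock sumnE !big_map natr_sum.
by apply: eq_bigr => j _; rewrite natrM !natr_Zp.
Qed.

Lemma Gamma_residues v : (v \in Gamma) = GammaS (residues v).
Proof.
rewrite inE /GammaS -residues0 (inj_eq residues_inj) formV_residues.
by congr (_ && _); rewrite -(inj_eq (@ord_inj _)) !val_Zp_nat.
Qed.

Theorem mainTheorem14 :
  (forall a : Lam, E6root a -> fmap a \in Gamma) /\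
  (forall a b : Lam, E6root a -> E6root b -> fmap a = fmap b -> a = b) /\
  (forall v : V, v \in Gamma -> exists a : Lam, E6root a /\ fmap a = v).
Proof.
split; [|split].
- move=> a /coords_E6root a_in.
  rewrite Gamma_residues residues_fmap; exact: fmapS_Gamma.
- move=> a b /coords_E6root a_in /coords_E6root b_in /(congr1 residues).
  by rewrite !residues_fmap => /(fmapS_inj a_in b_in) /coords_inj.
- move=> v; rewrite Gamma_residues => /(fmapS_onto (residues_words v)) /mapP[s s_in fs].
  have [a Ra coords_a] := E6root_of_rootsS s_in.
  exists a; split; first exact: Ra.
  by apply: residues_inj; rewrite residues_fmap coords_a fs.
Qed.
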